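(* Let $b,q,\lambda^i,\mu^i,\gamma^i$ ($i=1,\dots,n$) be smooth functions of $R^1,\dots,R^n$ with all $\mu^i$ nowhere zero, such that $q_i=\frac{\lambda^i}{\mu^i}b_i$ for all $i$ and, for all $i\ne j$, with $E_{ij}:=q(\mu^j-\mu^i)+b(\lambda^i-\lambda^j)+\gamma^i-\gamma^j$ nowhere zero and $K_{ij}:=\frac{\lambda^i-\lambda^j\mu^i/\mu^j}{E_{ij}}b_j$, $$\lambda^i_j=(\lambda^j-\lambda^i)K_{ij},\quad \mu^i_j=(\mu^j-\mu^i)K_{ij},\quad \gamma^i_j=(\gamma^j-\gamma^i)K_{ij},\quad b_{ij}=\frac{\lambda^i(1+\mu^j/\mu^i)-\lambda^j(1+\mu^i/\mu^j)}{E_{ij}}b_ib_j.$$ Then the functions $c^i:=\gamma^i+b\lambda^i-q\mu^i$ satisfy $\partial c^i/\partial R^j=0$ for $j\ne i$ and $E_{ij}=c^i-c^j$; locally there is a function $u$ with $u_i=\mu^ib_i$; and with $\phi^i:=\lambda^i/\mu^i$ one has, for all $i\ne j$, $$\phi^i_j=\frac{(\phi^j-\phi^i)^2}{c^j-c^i}u_j,\qquad u_{ij}=2\frac{\phi^j-\phi^i}{c^j-c^i}u_iu_j.$$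
   Context: Lower indices denote partial derivatives with respect to $R^1,\dots,R^n$. (This is the Gibbons-Tsarev system for hydrodynamic reductions of $\theta_{t\tilde t}+\theta_{z\tilde z}+\theta_{tx}\theta_{zy}-\theta_{ty}\theta_{zx}=0$ with $b=\theta_{zy}$, $q=\theta_{zx}$.) *)

(* Functions of (R^1,...,R^n) are modelled as
   total functions 'rV[R]_n -> R; hypotheses are imposed on an open set U. *)
From HB Require Import structures.
From mathcomp Require Import all_boot all_order all_algebra.
From mathcomp Require Import all_classical all_reals all_analysis.
Set Implicit Arguments. Unset Strict Implicit. Unset Printing Implicit Defensive.
Import Order.TTheory GRing.Theory Num.Theory.
Import numFieldNormedType.Exports.
Local Open Scope classical_set_scope.
Local Open Scope ring_scope.

Definition partial {R : realType} {n : nat} (f : 'rV[R]_n -> R) (i : 'I_n)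
  : 'rV[R]_n -> R := fun x => 'D_(delta_mx 0 i) f x.

Fixpoint iter_partial {R : realType} {n : nat} (l : seq 'I_n)
  (f : 'rV[R]_n -> R) : 'rV[R]_n -> R :=
  match l with
  | [::] => f
  | i :: l' => partial (iter_partial l' f) i
  end.

Definition smooth_on {R : realType} {n : nat} (U : set 'rV[R]_n)
  (f : 'rV[R]_n -> R) : Prop :=
  forall (l : seq 'I_n) (x : 'rV[R]_n), U x -> differentiable (iter_partial l f) x.

(* The identities [partial (c i) j = 0], [E i j = c i - c j] and the formulas
   for [partial (phi i) j] and [partial (partial u i) j] are pointwise algebraic
   consequences of the system once the derivatives are expanded by the Leibniz
   rule.  The substance is the existence of [u]: the system makes the 1-form
   [sum_k w_k dR^k], [w_k = mu_k b_k], closed ([partial (w k) j] is symmetric in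
   [j], [k]), so on a ball around [x0] the radial integral
   [u p = int_0^1 sum_k (p - x0)_k w_k (x0 + t (p - x0)) dt] is a potential:
   differentiating under the integral sign and using closedness turns
   [partial u j p] into the integral of [d/dt (t w_j (x0 + t (p - x0)))].
   The potential is smooth because its partial derivatives are the smooth [w_k],
   once one knows that continuous partial derivatives imply differentiability
   (mean value theorem along a staircase of coordinate steps). *)

From HB Require Import structures.
From mathcomp Require Import all_boot all_order all_algebra.
From mathcomp Require Import all_classical all_reals all_analysis.
From mathcomp Require Import ring.
Set Implicit Arguments. Unset Strict Implicit. Unset Printing Implicit Defensive.
Import Order.TTheory GRing.Theory Num.Theory.
Import numFieldNormedType.Exports.
Local Open Scope classical_set_scope.
Local Open Scope ring_scope.

Section near_eq.
Context {R : realType} {V W : normedModType R}.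

Lemma differentiable_of_littleo (f : V -> W) x (df : {linear V -> W}) :
  continuous df ->
  (forall eps, 0 < eps -> \forall h \near 0, `|f (h + x) - f x - df h| <= eps * `|h|) ->
  differentiable f x.
Proof.
move=> dfc H.
have E : f \o shift x = cst (f x) + df +o_ 0 id.
  apply/eqaddoP => eps ep; have := H eps ep; apply: filterS => h /=.
  by rewrite !fctE opprD addrA.
by apply/diff_locallyP; rewrite (diff_unique dfc E); split.
Qed.

Lemma differentiable_littleo (f : V -> W) x : differentiable f x ->
  forall eps, 0 < eps -> \forall h \near 0, `|f (h + x) - f x - 'd f x h| <= eps * `|h|.
Proof.
move=> /diff_locally /eqaddoP H eps ep; have := H eps ep; apply: filterS => h /=.
by rewrite !fctE opprD addrA.
Qed.

Lemma near_eq_differentiable (f g : V -> W) x :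
  (\near x, f x = g x) -> differentiable f x -> differentiable g x.
Proof.
move=> fg df; apply: (differentiable_of_littleo (diff_continuous df)) => eps ep.
have := differentiable_littleo df ep.
have : \forall h \near (0:V), f (h + x) = g (h + x).
  by rewrite (near_shift x); apply: filterS fg => y /=; rewrite sub0r subrK.
apply: filter_app2; apply: nearW => h -> .
by rewrite (nbhs_singleton fg).
Qed.

Lemma near_eq_continuous (f g : V -> W) x :
  (\near x, f x = g x) -> {for x, continuous f} -> {for x, continuous g}.
Proof.
move=> fg cf; rewrite /prop_for /continuous_at -(nbhs_singleton fg).
by apply: cvg_trans cf; apply: near_eq_cvg; apply: filterS fg.
Qed.

End near_eq.

Section smooth_on.
Context {R : realType} {n : nat}.
Implicit Types (U : set 'rV[R]_n) (f g : 'rV[R]_n -> R).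

Lemma iter_partial_cat (l1 l2 : seq 'I_n) f :
  iter_partial l1 (iter_partial l2 f) = iter_partial (l1 ++ l2) f.
Proof. by elim: l1 => //= i l ->. Qed.

Lemma iter_partial_eq_on U f g l : open U -> {in U, f =1 g} ->
  {in U, iter_partial l f =1 iter_partial l g}.
Proof.
move=> oU fg; elim: l => [|i l IH] y Uy //=; first exact: fg.
rewrite /partial; apply: near_eq_derive.
by apply: filterS (open_nbhs_nbhs (conj oU (set_mem Uy))) => z Uz; apply/IH/mem_set.
Qed.

Lemma smooth_on_differentiable U f x : smooth_on U f -> U x -> differentiable f x.
Proof. by move=> sf Ux; exact: (sf [::]). Qed.

Lemma smooth_on_derivable U f x v : smooth_on U f -> U x -> derivable f x v.
Proof. by move=> sf Ux; apply/diff_derivable/(smooth_on_differentiable sf). Qed.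

Lemma smooth_on_partial U f i : smooth_on U f -> smooth_on U (partial f i).
Proof.
move=> sf l x Ux; have -> : iter_partial l (partial f i) = iter_partial (l ++ [:: i]) f.
  by rewrite -iter_partial_cat.
exact: sf.
Qed.

Lemma smooth_on_eq U V f g : open V -> V `<=` U -> smooth_on U f ->
  {in V, f =1 g} -> smooth_on V g.
Proof.
move=> oV VU sf fg l y Vy; apply: (@near_eq_differentiable _ _ _ (iter_partial l f)).
  apply: filterS (open_nbhs_nbhs (conj oV Vy)) => z Vz.
  exact/(iter_partial_eq_on l oV fg)/mem_set.
exact/sf/VU.
Qed.

Definition differentiable_upto m U f := forall l : seq 'I_n, (size l <= m)%N ->
  forall y, U y -> differentiable (iter_partial l f) y.

Lemma iter_partialD m U f g : open U ->
  differentiable_upto m U f -> differentiable_upto m U g ->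
  forall l : seq 'I_n, (size l <= m)%N ->
  forall y, U y -> iter_partial l (f + g) y = iter_partial l f y + iter_partial l g y.
Proof.
move=> oU df dg; elim=> [|i l IH] sl y Uy //=.
have sl' : (size l <= m)%N by apply: leq_trans sl; rewrite /= leqnSn.
rewrite /partial -deriveD; last 2 first.
- exact/diff_derivable/df.
- exact/diff_derivable/dg.
apply: near_eq_derive; apply: filterS (open_nbhs_nbhs (conj oU Uy)) => z Uz.
exact: IH.
Qed.

Lemma differentiable_uptoD m U f g : open U ->
  differentiable_upto m U f -> differentiable_upto m U g ->
  differentiable_upto m U (f + g).
Proof.
move=> oU df dg l sl y Uy.
apply: (@near_eq_differentiable _ _ _ (iter_partial l f + iter_partial l g)).
  apply: filterS (open_nbhs_nbhs (conj oU Uy)) => z Uz.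
  by rewrite (iter_partialD oU df dg sl Uz).
by apply: differentiableD; [apply: df|apply: dg].
Qed.

Lemma differentiable_uptoM m U f g : open U -> smooth_on U f -> smooth_on U g ->
  differentiable_upto m U (f * g).
Proof.
move=> oU; elim: m f g => [|m IH] f g sf sg l sl y Uy.
  move: sl; rewrite leqn0 => /nilP -> /=.
  by apply: differentiableM; apply: smooth_on_differentiable Uy.
case/lastP: l sl => [|l i] sl.
  by apply: differentiableM; apply: smooth_on_differentiable Uy.
rewrite size_rcons ltnS in sl.
rewrite -cats1 -iter_partial_cat /=.
have Leibniz : {in U, partial (f * g) i =1 f * partial g i + g * partial f i}.
  move=> z /set_mem Uz; rewrite /partial deriveM //; exact: smooth_on_derivable Uz.
apply: (@near_eq_differentiable _ _ _
  (iter_partial l (f * partial g i + g * partial f i))).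
  apply: filterS (open_nbhs_nbhs (conj oU Uy)) => z Uz.
  by rewrite (iter_partial_eq_on l oU Leibniz) //; apply/mem_set.
have : differentiable_upto m U (f * partial g i + g * partial f i).
  by apply: differentiable_uptoD => //; apply: IH => //; exact: smooth_on_partial.
exact.
Qed.

Lemma smooth_onM U f g : open U -> smooth_on U f -> smooth_on U g ->
  smooth_on U (f * g).
Proof.
by move=> oU sf sg l; exact: (differentiable_uptoM (m := size l) oU sf sg (leqnn _)).
Qed.

End smooth_on.

Section mx_norm.
Context {R : realType} {m n : nat}.

Lemma mx_entry_le_norm (M : 'M[R]_(m, n)) i j : `|M i j| <= `|M|.
Proof.
rewrite [leRHS]/Num.norm /= mx_normrE; apply/bigmax_geP; right => /=.
by exists (i, j).
Qed.

Lemma mx_norm_le (M : 'M[R]_(m, n)) r : 0 <= r ->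
  (forall i j, `|M i j| <= r) -> `|M| <= r.
Proof. by move=> r0 H; rewrite [leLHS]/Num.norm /= mx_normrE; apply: bigmax_le. Qed.

End mx_norm.

Section line.
Context {R : realType} {V W : normedModType R}.

Let quotient_line (f : V -> W) (a v : V) (s : R) :
  (fun h : R => h^-1 *: (((fun t : R => f (t *: v + a)) \o shift s) (h *: 1)
                         - f (s *: v + a)))
  = (fun h : R => h^-1 *: ((f \o shift (s *: v + a)) (h *: v) - f (s *: v + a))).
Proof.
apply/funext => h /=; congr (_ *: (f _ - _)).
by rewrite scalerDl addrA [h%:A]mulr1.
Qed.

Lemma derivable_line (f : V -> W) (a v : V) (s : R) :
  derivable (fun t : R => f (t *: v + a)) s 1 <-> derivable f (s *: v + a) v.
Proof. by rewrite /derivable quotient_line. Qed.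

Lemma derive_line (f : V -> W) (a v : V) (s : R) :
  'D_1 (fun t : R => f (t *: v + a)) s = 'D_v f (s *: v + a).
Proof. by rewrite /derive quotient_line. Qed.

End line.

Section mean_value_line.
Context {R : realType}.

Lemma MVT_segment0 (g g' : R -> R) (t : R) :
  (forall s : R, `|s| <= `|t| -> is_derive s 1 g (g' s)) ->
  exists c, `|c| <= `|t| /\ g t - g 0 = t * g' c.
Proof.
move=> g'E; have dg s : `|s| <= `|t| -> derivable g s 1 by move=> /g'E [].
have [t0|t0] := leP 0 t.
  have in_t s : 0 <= s <= t -> `|s| <= `|t|.
    by case/andP=> s0 st; rewrite !ger0_norm.
  have [c /[!in_itv] /= /in_t ct] : exists2 c, c \in `[0, t] & g t - g 0 = g' c * (t - 0).
    apply: MVT_segment => //.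
      by move=> x /[!in_itv] /= /andP[x0 xt]; apply/g'E/in_t; rewrite !ltW.
    by apply: derivable_within_continuous => x /[!in_itv] /= /in_t /dg.
  by rewrite subr0 mulrC => E; exists c.
have in_t s : t <= s <= 0 -> `|s| <= `|t|.
  by case/andP=> ts s0; rewrite !ler0_norm ?lerN2 // ltW.
have [c /[!in_itv] /= /in_t ct] : exists2 c, c \in `[t, 0] & g 0 - g t = g' c * (0 - t).
  apply: MVT_segment; first exact: ltW.
    by move=> x /[!in_itv] /= /andP[tx x0]; apply/g'E/in_t; rewrite !ltW.
  by apply: derivable_within_continuous => x /[!in_itv] /= /in_t /dg.
move=> E; exists c; split => //.
by apply: oppr_inj; rewrite opprB E sub0r mulrN mulrC.
Qed.

Lemma mean_value_line {V : normedModType R} (f : V -> R) (S : set V) (z v : V) (t : R) :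
  (forall s, `|s| <= `|t| -> S (s *: v + z)) ->
  (forall p, S p -> derivable f p v) ->
  exists c, `|c| <= `|t| /\ f (t *: v + z) - f z = t * 'D_v f (c *: v + z).
Proof.
move=> Sline df; have [|c [ct]] := @MVT_segment0 (fun s => f (s *: v + z))
    (fun s => 'D_v f (s *: v + z)) t.
  move=> s st; apply: DeriveDef; last by rewrite derive_line.
  exact/derivable_line/df/Sline.
by rewrite scale0r add0r => E; exists c.
Qed.

End mean_value_line.

Section continuous_partials.
Context {R : realType} {n : nat}.

Definition linform (c : 'I_n -> R) (h : 'rV[R]_n) : R := \sum_k h 0 k * c k.

Lemma linform_is_linear c : linear (linform c).
Proof.
move=> a x y; rewrite /linform scaler_sumr -big_split /=; apply: eq_bigr => k _.
by rewrite !mxE mulrDl -mulrA.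
Qed.

HB.instance Definition _ c :=
  GRing.isLinear.Build R 'rV[R]_n R *:%R (linform c) (linform_is_linear c).

Lemma linform_continuous c : continuous (linform c).
Proof.
move=> h; apply: differentiable_continuous.
have -> : linform c = \sum_(k < n) (fun h : 'rV[R]_n => h 0 k * c k).
  by rewrite fct_sumE; apply/funext.
apply: differentiable_sum => k; apply: differentiableM => //.
exact: differentiable_coord.
Qed.

Definition staircase (h y : 'rV[R]_n) (k : nat) : 'rV[R]_n :=
  \row_m (if (m < k)%N then h 0 m else 0) + y.

Lemma staircase0 h y : staircase h y 0 = y.
Proof. by apply/rowP => m; rewrite !mxE add0r. Qed.

Lemma staircase_n h y : staircase h y n = h + y.
Proof. by apply/rowP => m; rewrite !mxE ltn_ord. Qed.

Lemma staircaseS h y (k : 'I_n) :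
  staircase h y k.+1 = h 0 k *: 'e_k + staircase h y k.
Proof.
apply/rowP => m; rewrite !mxE /= addrA; congr (_ + _).
rewrite ltnS leq_eqVlt; have [->|mk] := eqVneq m k.
  by rewrite eqxx ltnn mulr1 addr0.
by rewrite (negPf mk : (m == k :> nat) = false) mulr0 add0r.
Qed.

Lemma norm_staircase_step (h : 'rV[R]_n) (k : 'I_n) (s : R) : `|s| <= `|h 0 k| ->
  `|s *: 'e_k + \row_m (if (m < k)%N then h 0 m else 0)| <= `|h|.
Proof.
move=> sh; apply: mx_norm_le => // i m; rewrite !mxE [i]ord1 eqxx /=.
have [<-|km] := eqVneq k m.
  by rewrite ltnn mulr1 addr0 (le_trans sh) // mx_entry_le_norm.
rewrite mulr0 add0r; case: ifP => _; first exact: mx_entry_le_norm.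
by rewrite normr0.
Qed.

Lemma staircase_step_le (f : 'rV[R]_n -> R) (c : 'I_n -> R) y d e h (k : 'I_n) :
  `|h| < d ->
  (forall p, ball y d p ->
     derivable f p 'e_k /\ `|c k - 'D_'e_k f p| < e) ->
  `|f (staircase h y k.+1) - f (staircase h y k) - h 0 k * c k| <= `|h| * e.
Proof.
move=> hd fp; rewrite staircaseS.
have on_ball s : `|s| <= `|h 0 k| -> ball y d (s *: 'e_k + staircase h y k).
  move=> sh; rewrite -ball_normE /= distrC /staircase addrA addrK.
  exact: le_lt_trans (norm_staircase_step sh) hd.
have [s [sh ->]] := mean_value_line on_ball (fun p Sp => proj1 (fp p Sp)).
rewrite -mulrBr normrM ler_pM //; first exact: mx_entry_le_norm.
by have /fp[_ /ltW] := on_ball s sh; rewrite distrC.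
Qed.

Lemma differentiable_continuous_partials (S : set 'rV[R]_n) (f : 'rV[R]_n -> R) y :
  open S -> S y ->
  (forall z k, S z -> derivable f z 'e_k) ->
  (forall k, {for y, continuous (fun z => 'D_'e_k f z)}) ->
  differentiable f y.
Proof.
move=> oS Sy df cf; pose c k := 'D_'e_k f y.
apply: (@differentiable_of_littleo _ _ _ f y (linform c)) => [|eps e0].
  exact: linform_continuous.
pose e := eps / (n%:R + 1); have e_gt0 : 0 < e by rewrite divr_gt0 // ltr_wpDl.
have : \forall z \near y, S z /\ forall k, `|c k - 'D_'e_k f z| < e.
  apply: filterI; first exact: open_nbhs_nbhs.
  by apply: (@filter_forall _ _ _ (nbhs y)) => k; move/cvgrPdist_lt: (cf k); apply.
move=> /nbhs_ballP [d /= d0 Hd]; apply: filterS (nbhs0_lt d0) => h hd.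
have step (k : 'I_n) : `|f (staircase h y k.+1) - f (staircase h y k) - h 0 k * c k| <= `|h| * e.
  by apply: staircase_step_le hd _ => p /Hd [Sp ck]; split; [exact: df|exact: ck].
have -> : f (h + y) - f y - linform c h =
    \sum_(k < n) (f (staircase h y k.+1) - f (staircase h y k) - h 0 k * c k).
  rewrite sumrB -(big_mkord xpredT (fun k => f (staircase h y k.+1) - f (staircase h y k))).
  by rewrite telescope_sumr // staircase0 staircase_n.
apply: le_trans (ler_norm_sum _ _ _) _; apply: le_trans (ler_sum _ (fun k _ => step k)) _.
rewrite sumr_const card_ord -mulr_natr -mulrA [eps * _]mulrC ler_wpM2l //.
by rewrite /e mulrAC ler_pdivrMr ?ltr_wpDl // ler_wpM2l ?lerDl // ltW.
Qed.

End continuous_partials.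

Section directional_derivative.
Context {R : realType} {n : nat}.
Implicit Types (f : 'rV[R]_n -> R) (a v p : 'rV[R]_n).

Lemma derive_partialsE f p v : differentiable f p ->
  'D_v f p = \sum_k v 0 k * partial f k p.
Proof.
move=> dp; rewrite deriveE //; under eq_bigr do rewrite /partial deriveE //.
by rewrite {1}(row_sum_delta v) linear_sum; apply: eq_bigr => k _; rewrite linearZ.
Qed.

Lemma deriveZdir f p (c : R) v : differentiable f p ->
  'D_(c *: v) f p = c * 'D_v f p.
Proof. by move=> dp; rewrite !deriveE // linearZ. Qed.

Let quotient_homothety f (c : R) a v p :
  (fun h : R => h^-1 *: (((fun q => f (c *: (q - a) + a)) \o shift p) (h *: v)
     - f (c *: (p - a) + a)))
  = (fun h : R => h^-1 *: ((f \o shift (c *: (p - a) + a)) (h *: (c *: v))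
     - f (c *: (p - a) + a))).
Proof.
apply/funext => h /=; congr (_ *: (f _ - _)).
by rewrite -addrA scalerDr scalerA mulrC -scalerA -addrA.
Qed.

Lemma derive_homothety f (c : R) a v p :
  'D_v (fun q => f (c *: (q - a) + a)) p = 'D_(c *: v) f (c *: (p - a) + a).
Proof. by rewrite /derive quotient_homothety. Qed.

Lemma differentiable_homothety f (c : R) a p :
  differentiable f (c *: (p - a) + a) ->
  differentiable (fun q => f (c *: (q - a) + a)) p.
Proof. by move=> df; apply: (@differentiable_comp _ _ _ _ (fun q => c *: (q - a) + a)). Qed.

Let derivable_subr a v p : derivable (fun q : 'rV[R]_n => q - a) p v.
Proof. by apply: derivableB; [exact: derivable_id|exact: derivable_cst]. Qed.

Lemma derivable_coord_subr a v p k : derivable (fun q : 'rV[R]_n => (q - a) 0 k) p v.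
Proof. by move/derivable_mxP: (@derivable_subr a v p); apply. Qed.

Lemma derive_coord_subr a v p k : 'D_v (fun q : 'rV[R]_n => (q - a) 0 k) p = v 0 k.
Proof.
have := derive_mx (@derivable_subr a v p).
rewrite deriveB ?derive_id ?derive_cst ?subr0; last 2 first.
- exact: derivable_id.
- exact: derivable_cst.
by move/matrixP => /(_ 0 k); rewrite mxE => ->.
Qed.

Lemma differentiable_coord_subr a p k :
  differentiable (fun q : 'rV[R]_n => (q - a) 0 k) p.
Proof.
apply: (@differentiable_comp _ _ _ _ (fun q => q - a) (fun N : 'rV[R]_n => N 0 k)).
  exact: differentiableB.
exact: differentiable_coord.
Qed.

End directional_derivative.

Section segment_integral.
Context {R : realType} {n : nat}.

Local Notation mu := (@lebesgue_measure R).

(* The integrand is d/dt (t f(a + t (p - a))). *)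
Lemma Rintegral_segment (f : 'rV[R]_n -> R) (a p : 'rV[R]_n) :
  (forall t, 0 <= t <= 1 -> differentiable f (t *: (p - a) + a)) ->
  (forall t k, 0 <= t <= 1 -> differentiable (partial f k) (t *: (p - a) + a)) ->
  \int[mu]_(t in `[0, 1]) (t * 'D_(p - a) f (t *: (p - a) + a)
                           + f (t *: (p - a) + a)) = f p.
Proof.
move=> df dpf; pose g t := f (t *: (p - a) + a).
pose g' t := t * \sum_k (p - a) 0 k * partial f k (t *: (p - a) + a) + g t.
rewrite (@eq_Rintegral _ _ _ mu _ g'); last first.
  move=> t /[!inE] /= /[!in_itv] /= t01.
  by rewrite /g' /g (derive_partialsE (p - a) (df t t01)); reflexivity.
pose G t := t * g t.
have dg t : 0 <= t <= 1 -> derivable g t 1.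
  by move=> /df dft; apply/derivable_line/diff_derivable.
have dG t : 0 <= t <= 1 -> derivable G t 1.
  by move=> t01; apply: derivableM; [exact: derivable_id|exact: dg].
have G'E t : 0 <= t <= 1 -> derive1 G t = g' t.
  move=> t01; rewrite derive1E deriveM; [|exact: derivable_id|exact: dg].
  rewrite derive_id derive_line (derive_partialsE _ (df _ t01)).
  by rewrite /GRing.scale /= mulr1.
have dg' t : 0 <= t <= 1 -> derivable g' t 1.
  move=> t01; have -> : g' = id * \sum_k (cst ((p - a) 0 k) *
      (fun s => partial f k (s *: (p - a) + a))) + g.
    by apply/funext => s; rewrite /g' !fctE fct_sumE.
  apply: derivableD; last exact: dg.
  apply: derivableM; first exact: derivable_id.
  apply: derivable_sum => k; apply: derivableM; first exact: derivable_cst.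
  by apply/derivable_line/diff_derivable/dpf.
have G_cont t : 0 <= t <= 1 -> {for t, continuous G}.
  by move=> t01; apply/differentiable_continuous/derivable1_diffP/dG.
have G_LR : derivable_oo_LRcontinuous G 0 1.
  split.
  - by move=> t /[!in_itv] /= /andP[t0 t1]; apply: dG; rewrite !ltW.
  - by apply/cvg_at_right_filter/G_cont; rewrite lexx ler01.
  - by apply/cvg_at_left_filter/G_cont; rewrite lexx ler01.
have g'_cont : {within `[0, 1], continuous g'}.
  by apply: derivable_within_continuous => t /[!in_itv] /=; exact: dg'.
rewrite /Rintegral (continuous_FTC2 ltr01 g'_cont G_LR); last first.
  by move=> t /[!in_itv] /= /andP[t0 t1]; apply: G'E; rewrite !ltW.
by rewrite -EFinB /= /G /g mul0r subr0 mul1r scale1r subrK.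
Qed.

End segment_integral.

Section radial_potential.
Context {R : realType} {n : nat} (U : set 'rV[R]_n) (w : 'I_n -> 'rV[R]_n -> R)
  (x0 : 'rV[R]_n) (r : R).
Hypotheses (r_gt0 : 0 < r) (ballU : ball x0 r `<=` U)
  (w_diff : forall k p, U p -> differentiable (w k) p).

Local Notation mu := (@lebesgue_measure R).

Let e_entry_le1 j k : `|('e_j : 'rV[R]_n) 0 k| <= 1.
Proof. by rewrite mxE; case: (_ && _); rewrite ?normr1 ?normr0. Qed.

Definition radial_integrand (t : R) (p : 'rV[R]_n) :=
  \sum_(k < n) (p - x0) 0 k * w k (t *: (p - x0) + x0).

Definition radial_potential (p : 'rV[R]_n) :=
  \int[mu]_(t in `[0, 1]) radial_integrand t p.

Lemma homothety_in_ball p t : ball x0 r p -> 0 <= t <= 1 ->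
  ball x0 r (t *: (p - x0) + x0).
Proof.
rewrite -!ball_normE /= => pr /andP[t0 t1]; rewrite distrC addrK normrZ.
by apply: le_lt_trans pr; rewrite distrC ger0_norm // ler_piMl.
Qed.

Let radial_integrandE t : radial_integrand t =
  \sum_(k < n) ((fun p => (p - x0) 0 k) * (fun p => w k (t *: (p - x0) + x0))).
Proof. by rewrite fct_sumE; apply/funext. Qed.

Let w_homothety_diff t p k : 0 <= t <= 1 -> ball x0 r p ->
  differentiable (fun p => w k (t *: (p - x0) + x0)) p.
Proof. by move=> t01 bp; apply/differentiable_homothety/w_diff/ballU/homothety_in_ball. Qed.

Lemma differentiable_radial_integrand t p : 0 <= t <= 1 -> ball x0 r p ->
  differentiable (radial_integrand t) p.
Proof.
move=> t01 bp; rewrite radial_integrandE; apply: differentiable_sum => k.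
by apply: differentiableM; [exact: differentiable_coord_subr|exact: w_homothety_diff].
Qed.

Lemma derive_radial_integrand t p v : 0 <= t <= 1 -> ball x0 r p ->
  'D_v (radial_integrand t) p =
  \sum_(k < n) ((p - x0) 0 k * (t * 'D_v (w k) (t *: (p - x0) + x0))
                + w k (t *: (p - x0) + x0) * v 0 k).
Proof.
move=> t01 bp; rewrite radial_integrandE derive_sum; last first.
  move=> k; apply/diff_derivable/differentiableM; first exact: differentiable_coord_subr.
  exact: w_homothety_diff.
apply: eq_bigr => k _; rewrite deriveM; last 2 first.
- exact: derivable_coord_subr.
- exact/diff_derivable/w_homothety_diff.
rewrite derive_homothety deriveZdir ?derive_coord_subr //.
exact/w_diff/ballU/homothety_in_ball.
Qed.

Lemma derivable_radial_integrand_t p t : ball x0 r p -> 0 <= t <= 1 ->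
  derivable (radial_integrand ^~ p) t 1.
Proof.
move=> bp t01; have -> : radial_integrand ^~ p =
    \sum_(k < n) (cst ((p - x0) 0 k) * (fun t => w k (t *: (p - x0) + x0))).
  by rewrite fct_sumE; apply/funext.
apply: derivable_sum => k; apply: derivableM; first exact: derivable_cst.
exact/derivable_line/diff_derivable/w_diff/ballU/homothety_in_ball.
Qed.

Lemma integrable_radial_integrand p : ball x0 r p ->
  mu.-integrable `[0, 1] (EFin \o radial_integrand ^~ p).
Proof.
move=> bp; apply: continuous_compact_integrable; first exact: segment_compact.
apply: derivable_within_continuous => t /[!in_itv] /= t01.
exact: derivable_radial_integrand_t.
Qed.

Variables (M1 : 'I_n -> R) (M2 : 'I_n -> 'I_n -> R).
Hypotheses (w_bound : forall k p, ball x0 r p -> `|w k p| <= M1 k)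
  (partial_w_bound : forall k j p, ball x0 r p -> `|partial (w k) j p| <= M2 k j).

Let M_bound_ge0 k j : 0 <= M1 k + r * M2 k j.
Proof.
have M1_ge0 := le_trans (normr_ge0 _) (w_bound k (ballxx _ r_gt0)).
have M2_ge0 := le_trans (normr_ge0 _) (partial_w_bound k j (ballxx _ r_gt0)).
by rewrite addr_ge0 // mulr_ge0 // ltW.
Qed.

Lemma partial_radial_integrand_bound t p j : 0 <= t <= 1 -> ball x0 r p ->
  `|'D_'e_j (radial_integrand t) p| <= \sum_k (M1 k + r * M2 k j).
Proof.
move=> t01 bp; have ball_t := homothety_in_ball bp t01.
rewrite derive_radial_integrand //; apply: le_trans (ler_norm_sum _ _ _) _.
apply: ler_sum => k _; apply: le_trans (ler_normD _ _) _; rewrite addrC.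
apply: lerD; rewrite normrM.
  by apply: le_trans (ler_piMr _ (e_entry_le1 j k)) (w_bound k ball_t).
apply: ler_pM => //.
  apply: le_trans (mx_entry_le_norm _ _ _) _.
  by move: bp; rewrite -ball_normE /= distrC => /ltW.
rewrite normrM (ger0_norm (andP t01).1).
exact: le_trans (ler_piMl _ (andP t01).2) (partial_w_bound k j ball_t).
Qed.

Lemma partial_radial_potential_integral y j : ball x0 r y ->
  derivable radial_potential y 'e_j /\
  'D_'e_j radial_potential y = \int[mu]_(t in `[0, 1]) 'D_'e_j (radial_integrand t) y.
Proof.
move=> yb; have [d d0 bd] : exists2 d, 0 < d & ball y d `<=` ball x0 r.
  have /nbhs_ballP [d /= d0 H] : nbhs y (ball x0 r).
    by apply: open_nbhs_nbhs; split; [exact: ball_open|exact: yb].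
  by exists d.
pose f (s t : R) := radial_integrand t (s *: 'e_j + y).
have on_ball s : `]-d, d[%classic s -> ball x0 r (s *: 'e_j + y).
  move=> /= /[!in_itv] /= sd; apply: bd; rewrite -ball_normE /= distrC addrK normrZ.
  apply: le_lt_trans (_ : `|s| * 1 < d); last by rewrite mulr1 ltr_norml.
  rewrite ler_wpM2l // mx_norm_le // => i k.
  by rewrite [i]ord1 e_entry_le1.
have I0 : `]-d, d[%classic (0:R) by rewrite /= in_itv /= oppr_lt0 d0.
have intf s : `]-d, d[%classic s -> mu.-integrable `[0, 1] (EFin \o f s).
  by move/on_ball; exact: integrable_radial_integrand.
have df s t : `]-d, d[%classic s -> `[0, 1]%classic t -> derivable (f ^~ t) s 1.
  move=> /on_ball sd /= /[!in_itv] /= t01.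
  exact/derivable_line/diff_derivable/differentiable_radial_integrand.
pose C := \sum_(k < n) (M1 k + r * M2 k j).
have C_ge0 (t : R) : 0 <= cst C t by apply: sumr_ge0 => k _.
have intC : mu.-integrable `[0, 1] (EFin \o cst C).
  apply: continuous_compact_integrable; first exact: segment_compact.
  exact/continuous_subspaceT/cst_continuous.
have f_bound s t : `]-d, d[%classic s -> `[0, 1]%classic t ->
    `|partial1of2 f s t| <= cst C t.
  move=> /on_ball sd /= /[!in_itv] /= t01.
  by rewrite partial1of2E derive_line partial_radial_integrand_bound.
have D1 := @derivable_under_integral R _ _ mu f _ (measurable_itv _) 0 (-d) d I0
  intf df (cst C) C_ge0 intC f_bound.
have D2 := @differentiation_under_integral R _ _ mu f _ (measurable_itv _) 0 (-d) d I0
  intf df (cst C) C_ge0 intC f_bound.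
have Fe : (fun s => \int[mu]_(t in `[0, 1]) f s t) =
  (fun s => radial_potential (s *: 'e_j + y)) by [].
rewrite Fe in D1 D2; split; first by move/derivable_line: D1; rewrite scale0r add0r.
have := derive_line radial_potential y 'e_j 0; rewrite scale0r add0r => <-.
rewrite -derive1E D2; apply: eq_Rintegral => t _.
by rewrite partial1of2E derive_line scale0r add0r.
Qed.

Hypotheses (w_partial_diff : forall k j p, U p -> differentiable (partial (w k) j) p)
  (w_closed : forall j k p, U p -> partial (w k) j p = partial (w j) k p).

Lemma partial_radial_integrand t y j : 0 <= t <= 1 -> ball x0 r y ->
  'D_'e_j (radial_integrand t) y =
  t * 'D_(y - x0) (w j) (t *: (y - x0) + x0) + w j (t *: (y - x0) + x0).
Proof.
move=> t01 yb; have Ut := ballU (homothety_in_ball yb t01).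
rewrite derive_radial_integrand // big_split /=; congr (_ + _).
  rewrite (derive_partialsE _ (w_diff j Ut)) mulr_sumr; apply: eq_bigr => k _.
  by rewrite mulrCA -(w_closed j k Ut).
rewrite (bigD1 j) //= big1 ?addr0; first by rewrite mxE !eqxx mulr1.
by move=> k kj; rewrite mxE eqxx /= (negPf kj) mulr0.
Qed.

Lemma partial_radial_potential y j : ball x0 r y ->
  derivable radial_potential y 'e_j /\ 'D_'e_j radial_potential y = w j y.
Proof.
move=> yb; have [dP ->] := partial_radial_potential_integral j yb; split => //.
have Ut t : 0 <= t <= 1 -> U (t *: (y - x0) + x0).
  by move=> t01; apply/ballU/homothety_in_ball.
rewrite -[RHS](@Rintegral_segment _ _ (w j) x0 y); last 2 first.
- by move=> t /Ut; exact: w_diff.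
- by move=> t k /Ut; exact: w_partial_diff.
apply: eq_Rintegral => t /[!inE] /= /[!in_itv] /= t01.
exact: partial_radial_integrand.
Qed.

End radial_potential.

Section local_potential.
Context {R : realType} {n : nat}.

Lemma near_norm_le_add1 (f : 'rV[R]_n -> R) x : {for x, continuous f} ->
  \forall y \near x, `|f y| <= `|f x| + 1.
Proof.
move/cvgrPdist_lt/(_ 1 ltr01); apply: filterS => y xy.
rewrite -[f y](subKr (f x)); apply: le_trans (ler_normB _ _) _.
by rewrite lerD2l ltW.
Qed.

Lemma smooth_on_antiderivative (V : set 'rV[R]_n) (u : 'rV[R]_n -> R)
    (w : 'I_n -> 'rV[R]_n -> R) :
  open V -> (forall i, smooth_on V (w i)) ->
  (forall i y, V y -> derivable u y 'e_i /\ 'D_'e_i u y = w i y) ->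
  smooth_on V u.
Proof.
move=> oV sw uw; have partial_uE i : {in V, partial u i =1 w i}.
  by move=> y /set_mem /(uw i) [].
case/lastP => [|l i] y Vy /=.
  apply: (differentiable_continuous_partials oV Vy).
    by move=> z k /(uw k) [].
  move=> k; apply: (@near_eq_continuous _ _ _ (w k)).
    apply: filterS (open_nbhs_nbhs (conj oV Vy)) => z Vz.
    by rewrite -(partial_uE k) //; apply/mem_set.
  exact/differentiable_continuous/(smooth_on_differentiable (sw k)).
rewrite -cats1 -iter_partial_cat /=.
have /(_ l y Vy) // : smooth_on V (partial u i).
apply: (smooth_on_eq oV _ (sw i)) => // z Vz; by rewrite partial_uE.
Qed.

Lemma exists_local_potential (U : set 'rV[R]_n) (w : 'I_n -> 'rV[R]_n -> R) x0 :
  open U -> U x0 -> (forall k, smooth_on U (w k)) ->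
  (forall j k p, U p -> partial (w k) j p = partial (w j) k p) ->
  exists V : set 'rV[R]_n, [/\ open V, V x0, V `<=` U &
    exists u : 'rV[R]_n -> R, smooth_on V u /\
      forall i y, V y -> partial u i y = w i y].
Proof.
move=> oU Ux0 sw w_closed.
have w_diff k p : U p -> differentiable (w k) p.
  exact: smooth_on_differentiable (sw k).
have w_partial_diff k j p : U p -> differentiable (partial (w k) j) p.
  exact: smooth_on_differentiable (smooth_on_partial j (sw k)).
have : \forall z \near x0, U z /\ (forall k, `|w k z| <= `|w k x0| + 1) /\
    (forall k j, `|partial (w k) j z| <= `|partial (w k) j x0| + 1).
  apply: filterI; first exact: open_nbhs_nbhs.
  apply: filterI; apply: (@filter_forall _ _ _ (nbhs x0)) => k.
    exact/near_norm_le_add1/differentiable_continuous/w_diff.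
  apply: (@filter_forall _ _ _ (nbhs x0)) => j.
  exact/near_norm_le_add1/differentiable_continuous/w_partial_diff.
move=> /nbhs_ballP [r /= r_gt0 Hr]; have ballU : ball x0 r `<=` U by move=> p /Hr[].
have u_partial := partial_radial_potential r_gt0 ballU w_diff
  (fun k p bp => (Hr p bp).2.1 k) (fun k j p bp => (Hr p bp).2.2 k j)
  w_partial_diff w_closed.
have oB : open (ball x0 r) by exact: ball_open.
exists (ball x0 r); split => //; first exact: ballxx.
exists (radial_potential w x0); split => [|i y /(u_partial y i) [] //].
apply: (smooth_on_antiderivative oB _ (fun i y => u_partial y i)) => i.
exact: smooth_on_eq oB ballU (sw i) (fun _ _ => erefl).
Qed.

End local_potential.

Section gibbons_tsarev.
Variables (R : realType) (n : nat) (U : set 'rV[R]_n) (b q : 'rV[R]_n -> R)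
  (lam mu gam : 'I_n -> 'rV[R]_n -> R).
Hypotheses (oU : open U) (sb : smooth_on U b) (sq : smooth_on U q)
  (slam : forall i, smooth_on U (lam i)) (smu : forall i, smooth_on U (mu i))
  (sgam : forall i, smooth_on U (gam i)).
Hypothesis mu_neq0 : forall i x, U x -> mu i x != 0.
Hypothesis partial_q : forall i x, U x -> partial q i x = lam i x / mu i x * partial b i x.

Let E i j x :=
  q x * (mu j x - mu i x) + b x * (lam i x - lam j x) + gam i x - gam j x.
Hypothesis E_neq0 : forall i j x, i != j -> U x -> E i j x != 0.

Let K i j x := (lam i x - lam j x * mu i x / mu j x) / E i j x * partial b j x.
Hypothesis system : forall i j x, i != j -> U x ->
  [/\ partial (lam i) j x = (lam j x - lam i x) * K i j x,
      partial (mu i) j x = (mu j x - mu i x) * K i j x,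
      partial (gam i) j x = (gam j x - gam i x) * K i j x &
      partial (partial b i) j x =
        (lam i x * (1 + mu j x / mu i x) - lam j x * (1 + mu i x / mu j x))
          / E i j x * partial b i x * partial b j x].

Let c i x := gam i x + b x * lam i x - q x * mu i x.
Let phi i x := lam i x / mu i x.
Let w i x := mu i x * partial b i x.

Lemma E_eq_c_sub i j x : E i j x = c i x - c j x.
Proof. by rewrite /E /c; ring. Qed.

Lemma c_sub_neq0 i j x : i != j -> U x -> c i x - c j x != 0.
Proof. by move=> ij Ux; rewrite -E_eq_c_sub E_neq0. Qed.

Lemma partial_c i j x : U x -> partial (c i) j x =
  partial (gam i) j x + (b x * partial (lam i) j x + lam i x * partial b j x)
  - (q x * partial (mu i) j x + mu i x * partial q j x).
Proof.
move=> Ux; have dg : derivable (gam i) x 'e_j := smooth_on_derivable (sgam i) Ux.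
have db : derivable b x 'e_j := smooth_on_derivable sb Ux.
have dl : derivable (lam i) x 'e_j := smooth_on_derivable (slam i) Ux.
have dq : derivable q x 'e_j := smooth_on_derivable sq Ux.
have dm : derivable (mu i) x 'e_j := smooth_on_derivable (smu i) Ux.
rewrite /partial /c (deriveB (derivableD dg (derivableM db dl)) (derivableM dq dm)).
by rewrite (deriveD dg (derivableM db dl)) (deriveM db dl) (deriveM dq dm).
Qed.

Lemma partial_c_eq0 i j x : i != j -> U x -> partial (c i) j x = 0.
Proof.
move=> ij Ux; rewrite partial_c //; have [-> -> -> _] := system ij Ux.
have mj := mu_neq0 j Ux; have := E_neq0 ij Ux; rewrite partial_q // /K /E => Eij.
by field; rewrite mj Eij.
Qed.

Lemma partial_phi i j x : i != j -> U x ->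
  partial (phi i) j x = (phi j x - phi i x) ^+ 2 / (c j x - c i x) * w j x.
Proof.
move=> ij Ux; have dl : derivable (lam i) x 'e_j := smooth_on_derivable (slam i) Ux.
have dm : derivable (mu i) x 'e_j := smooth_on_derivable (smu i) Ux.
have mi := mu_neq0 i Ux.
rewrite /partial /phi (deriveM dl (derivableV mi dm)) (deriveV mi dm).
have [hl hm _ _] := system ij Ux; rewrite /partial in hl hm; rewrite hl hm.
have mj := mu_neq0 j Ux; have := E_neq0 ij Ux; rewrite /K /E => Eij.
have ji : j != i by rewrite eq_sym.
have := c_sub_neq0 ji Ux; rewrite /c /w => cji.
rewrite -/(partial b j x) /GRing.scale /=.
by field; rewrite mi mj Eij cji.
Qed.

Lemma partial_w i j x : i != j -> U x ->
  partial (w i) j x = 2 * (phi j x - phi i x) / (c j x - c i x) * w i x * w j x.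
Proof.
move=> ij Ux; have dm : derivable (mu i) x 'e_j := smooth_on_derivable (smu i) Ux.
have dbi : derivable (partial b i) x 'e_j.
  exact: smooth_on_derivable (smooth_on_partial i sb) Ux.
rewrite /partial /w (deriveM dm dbi).
have [_ hm _ hb] := system ij Ux; rewrite /partial in hm hb; rewrite hm hb.
have mi := mu_neq0 i Ux; have mj := mu_neq0 j Ux.
have := E_neq0 ij Ux; rewrite /K /E => Eij.
have ji : j != i by rewrite eq_sym.
have := c_sub_neq0 ji Ux; rewrite /c /phi => cji.
rewrite -/(partial b j x) -/(partial b i x) /GRing.scale /=.
by field; rewrite mi mj Eij cji.
Qed.

Lemma partial_w_sym j k x : U x -> partial (w k) j x = partial (w j) k x.
Proof.
move=> Ux; have [-> //|jk] := eqVneq j k.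
have kj : k != j by rewrite eq_sym.
have cjk := c_sub_neq0 jk Ux; have ckj := c_sub_neq0 kj Ux.
by rewrite !partial_w //; field; rewrite cjk ckj.
Qed.

Lemma smooth_on_w i : smooth_on U (w i).
Proof.
have -> : w i = mu i * partial b i by apply/funext.
exact/(smooth_onM oU)/smooth_on_partial.
Qed.

End gibbons_tsarev.

Theorem mainTheorem14 (R : realType) (n : nat) (U : set 'rV[R]_n)
  (b q : 'rV[R]_n -> R) (lam mu gam : 'I_n -> 'rV[R]_n -> R) :
  open U ->
  smooth_on U b -> smooth_on U q ->
  (forall i, smooth_on U (lam i)) -> (forall i, smooth_on U (mu i)) ->
  (forall i, smooth_on U (gam i)) ->
  (forall i x, U x -> mu i x != 0) ->
  (forall i x, U x -> partial q i x = lam i x / mu i x * partial b i x) ->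
  let E := fun i j x =>
    q x * (mu j x - mu i x) + b x * (lam i x - lam j x) + gam i x - gam j x in
  (forall i j x, i != j -> U x -> E i j x != 0) ->
  let K := fun i j x =>
    (lam i x - lam j x * mu i x / mu j x) / E i j x * partial b j x in
  (forall i j x, i != j -> U x ->
     [/\ partial (lam i) j x = (lam j x - lam i x) * K i j x,
         partial (mu i) j x = (mu j x - mu i x) * K i j x,
         partial (gam i) j x = (gam j x - gam i x) * K i j x &
         partial (partial b i) j x =
           (lam i x * (1 + mu j x / mu i x) - lam j x * (1 + mu i x / mu j x))
             / E i j x * partial b i x * partial b j x]) ->
  let c := fun i x => gam i x + b x * lam i x - q x * mu i x in
  let phi := fun i x => lam i x / mu i x in
  (forall i j x, i != j -> U x ->
     partial (c i) j x = 0 /\ E i j x = c i x - c j x) /\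
  (forall x0, U x0 ->
     exists V : set 'rV[R]_n, [/\ open V, V x0, V `<=` U &
       exists u : 'rV[R]_n -> R,
         smooth_on V u /\
         (forall i y, V y -> partial u i y = mu i y * partial b i y) /\
         (forall i j y, i != j -> V y ->
            partial (phi i) j y =
              (phi j y - phi i y) ^+ 2 / (c j y - c i y) * partial u j y /\
            partial (partial u i) j y =
              2 * (phi j y - phi i y) / (c j y - c i y)
                * partial u i y * partial u j y)]).
Proof.
move=> oU sb sq slam smu sgam mu_neq0 partial_q E E_neq0 K system c phi.
split=> [i j x ij Ux|x0 Ux0].
  by split; [apply: (partial_c_eq0 (U := U)) | apply: E_eq_c_sub].
have [V [oV Vx0 VU [u [su uE]]]] := exists_local_potential oU Ux0
  (smooth_on_w oU sb smu) (partial_w_sym sb smu mu_neq0 E_neq0 system).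
exists V; split => //; exists u; do 2!split => //.
move=> i j y ij Vy; have Uy := VU y Vy.
have partial2_uE : partial (partial u i) j y = partial (fun y => mu i y * partial b i y) j y.
  by apply: near_eq_derive; apply: filterS (open_nbhs_nbhs (conj oV Vy)) => z /uE.
rewrite partial2_uE !uE //.
by split; [apply: (partial_phi (U := U)) | apply: (partial_w (U := U))].
Qed.
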